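(* Let $V\in\mathcal{UM}$, $m=\deg(V,0)$, $\xi>0$, $s_0=V_*(\xi)$, and let $\bar\xi>0$ be the unique number with $\bar V(\bar\xi)=V(\xi)$. Let $\gamma\in\mathbb R$ be such that $\bar V\neq V\circ\gamma$ (i.e. $V(-x)\ne V(\gamma x)$ for some $x$), and let $N\ge1$ be the integer with $W^{(k)}(s_0)=\gamma\bar W^{(k)}(s_0)$ for $1\le k<N$ and $W^{(N)}(s_0)\ne\gamma\bar W^{(N)}(s_0)$ (it exists). Then $$\lim_{\theta\searrow V(\xi)}D^{(N)}(a_\xi-\gamma\bar a_{\bar\xi})(\theta)=\pm\infty,$$ more precisely $+\infty$ if $\gamma\bar W^{(N)}(s_0)>W^{(N)}(s_0)$ and $-\infty$ if $\gamma\bar W^{(N)}(s_0)<W^{(N)}(s_0)$.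
   Context: $\mathcal{UM}$: real-analytic $V:\mathbb R\to\mathbb R_{\ge0}$ with $V(0)=0$, $yV'(y)>0$ for $y\neq0$, $V(y)\to\infty$ as $y\to\pm\infty$; $m=\deg(V,0)$ is the least $m$ with $V^{(m)}(0)\ne0$. $V_*:\mathbb R\to\mathbb R$ is the bi-analytic map with $V_*'>0$ and $V_*^m=V$; $W=V_*^{-1}$; $\bar V(y)=V(-y)$, $\bar W(x)=-W(-x)$ (the inverse of $\bar V_*(y)=-V_*(-y)$). For $\xi>0$ and $\theta\ge V(\xi)$: $a_\xi(\theta)=\int_0^\xi\frac{dy}{\sqrt2\sqrt{\theta-V(y)}}$, and $\bar a_{\bar\xi}(\theta)=\int_0^{\bar\xi}\frac{dy}{\sqrt2\sqrt{\theta-\bar V(y)}}$; these are analytic on $(V(\xi),\infty)$. For $\alpha\ge0$, $D_\alpha f(\theta)=m\frac{d}{d\theta}(\theta^\alpha f(\theta))$, and $D^{(n)}=D_{1-1/m}\circ\cdots\circ D_{1-1/m}\circ D_{1/2-1/m}$ ($n-1$ factors $D_{1-1/m}$) for $n\ge1$. *)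

From Stdlib Require Import Reals.
From Coquelicot Require Import Coquelicot.
Open Scope R_scope.

Definition real_analytic (f : R -> R) : Prop :=
  forall x0 : R, exists r : R, 0 < r /\ exists a : nat -> R,
    forall x, Rabs (x - x0) < r -> is_pseries a (x - x0) (f x).

Definition UM (V : R -> R) : Prop :=
  real_analytic V /\
  (forall y, 0 <= V y) /\
  V 0 = 0 /\
  (forall y, y <> 0 -> y * Derive V y > 0) /\
  is_lim V p_infty p_infty /\
  is_lim V m_infty p_infty.

Definition is_deg0 (V : R -> R) (m : nat) : Prop :=
  Derive_n V m 0 <> 0 /\ forall k, (k < m)%nat -> Derive_n V k 0 = 0.

Definition is_Vstar (V : R -> R) (m : nat) (Vs W : R -> R) : Prop :=
  real_analytic Vs /\ real_analytic W /\
  (forall y, W (Vs y) = y) /\ (forall x, Vs (W x) = x) /\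
  (forall y, Derive Vs y > 0) /\
  (forall y, Vs y ^ m = V y).

Definition Vbar (V : R -> R) : R -> R := fun y => V (- y).
Definition Wbar (W : R -> R) : R -> R := fun x => - W (- x).

Definition a_fun (V : R -> R) (xi : R) : R -> R :=
  fun theta => RInt (fun y => / (sqrt 2 * sqrt (theta - V y))) 0 xi.

Definition D_op (m : nat) (alpha : R) (f : R -> R) : R -> R :=
  fun theta => INR m * Derive (fun t => Rpower t alpha * f t) theta.

Fixpoint Dn (m : nat) (n : nat) (f : R -> R) : R -> R :=
  match n with
  | O => f
  | S O => D_op m (1/2 - 1 / INR m) f
  | S k => D_op m (1 - 1 / INR m) (Dn m k f)
  end.

From Stdlib Require Import Reals Lra Lia Psatz.
From Stdlib Require Import Classical ClassicalEpsilon FunctionalExtensionality Wf_nat.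
From Coquelicot Require Import Coquelicot.
Open Scope R_scope.

(* Substituting [y = W s] (resp. [y = Wbar s]) turns [a_xi - gamma abar_xibar] into
   [/ sqrt 2 * int_0^s0 phi s / sqrt (theta - s^m) ds] with [phi = W' - gamma Wbar'].
   Differentiating under the integral and integrating by parts shows that each factor of
   [D^(N)] maps such an integral with weight [phi_k] to a power of [theta] times the integral
   with weight [phi_(k+1) = s phi_k' - k phi_k], minus the boundary term
   [s0 phi_k(s0) / sqrt (theta - s0^m)].  The boundary terms vanish while [phi] vanishes at
   [s0], so after [N] steps only the one carrying [phi^(N-1)(s0) = W^(N)(s0) - gamma
   Wbar^(N)(s0)] survives; it blows up like [(theta - s0^m)^(-1/2)] while the integral stays
   bounded.  Such an [N] exists by the identity theorem: otherwise [W = gamma Wbar] on all of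
   [R], which forces [Vbar = V o gamma]. *)

(** * Smooth functions *)

Definition smooth (f : R -> R) : Prop := forall k x, ex_derive (Derive_n f k) x.

Lemma smooth_ex_derive_n f k x : smooth f -> ex_derive_n f k x.
Proof. intros Hf; destruct k; [easy | apply Hf]. Qed.

Lemma smooth_ex_derive f x : smooth f -> ex_derive f x.
Proof. intros Hf; exact (Hf 0%nat x). Qed.

Lemma smooth_continuous f k x : smooth f -> continuous (Derive_n f k) x.
Proof. intros Hf; apply (ex_derive_continuous (V := R_NormedModule)), Hf. Qed.

Lemma Derive_n_Derive f k x : Derive_n (Derive f) k x = Derive_n f (S k) x.
Proof. rewrite <- Nat.add_1_r; apply (Derive_n_comp f k 1). Qed.

Lemma smooth_Derive f : smooth f -> smooth (Derive f).
Proof.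
  intros Hf k x; apply ex_derive_ext with (Derive_n f (S k)); [| apply Hf].
  intros y; symmetry; apply Derive_n_Derive.
Qed.

Lemma smooth_ext f g : (forall x, f x = g x) -> smooth f -> smooth g.
Proof. intros E; replace g with f; [easy | now apply functional_extensionality]. Qed.

Lemma Derive_n_minus_smooth f g k x : smooth f -> smooth g ->
  Derive_n (fun y => f y - g y) k x = Derive_n f k x - Derive_n g k x.
Proof.
  intros Hf Hg; apply Derive_n_minus; apply filter_forall; intros;
    now apply smooth_ex_derive_n.
Qed.

Lemma smooth_minus f g : smooth f -> smooth g -> smooth (fun y => f y - g y).
Proof.
  intros Hf Hg k x.
  replace (Derive_n _ k) with (fun y => Derive_n f k y - Derive_n g k y).
  - auto_derive; auto.
  - apply functional_extensionality; intros y; now rewrite Derive_n_minus_smooth.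
Qed.

Lemma smooth_scal f a : smooth f -> smooth (fun y => a * f y).
Proof.
  intros Hf k x.
  replace (Derive_n _ k) with (fun y => a * Derive_n f k y).
  - auto_derive; auto.
  - apply functional_extensionality; intros y; now rewrite Derive_n_scal_l.
Qed.

Lemma smooth_comp_opp f : smooth f -> smooth (fun y => f (- y)).
Proof.
  intros Hf k x.
  replace (Derive_n _ k) with (fun y => (-1) ^ k * Derive_n f k (- y)).
  - auto_derive; auto.
  - apply functional_extensionality; intros y; rewrite Derive_n_comp_opp; [easy |].
    apply filter_forall; intros; now apply smooth_ex_derive_n.
Qed.

Lemma Derive_n_mult_id f k x : smooth f ->
  Derive_n (fun y => y * f y) (S k) x = x * Derive_n f (S k) x + INR (S k) * Derive_n f k x.
Proof.
  intros Hf; revert x; induction k as [|k IH]; intros x.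
  - change (Derive (fun y => y * f y) x = x * Derive f x + INR 1 * f x).
    rewrite Derive_mult, Derive_id; [simpl; ring | apply ex_derive_id | now apply smooth_ex_derive].
  - change (Derive (Derive_n (fun y => y * f y) (S k)) x
      = x * Derive (Derive_n f (S k)) x + INR (S (S k)) * Derive (Derive_n f k) x).
    rewrite (Derive_ext _ (fun y => y * Derive_n f (S k) y + INR (S k) * Derive_n f k y) x IH).
    rewrite Derive_plus, Derive_mult, Derive_scal, Derive_id.
    + change (Derive (Derive_n f k) x) with (Derive_n f (S k) x); rewrite !S_INR; ring.
    + apply ex_derive_id.
    + apply Hf.
    + apply ex_derive_mult; [apply ex_derive_id | apply Hf].
    + apply ex_derive_scal, Hf.
Qed.

Lemma smooth_mult_id f : smooth f -> smooth (fun y => y * f y).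
Proof.
  intros Hf [|k] x.
  - apply ex_derive_mult; [apply ex_derive_id | exact (Hf 0%nat x)].
  - replace (Derive_n _ (S k))
      with (fun y => y * Derive_n f (S k) y + INR (S k) * Derive_n f k y).
    + auto_derive; repeat split; [exact (Hf (S k) x) | exact (Hf k x)].
    + apply functional_extensionality; intros y; now rewrite Derive_n_mult_id.
Qed.

(** * Real-analytic functions *)

Lemma locally_Rabs_lt x0 r x : Rabs (x - x0) < r -> locally x (fun t => Rabs (t - x0) < r).
Proof.
  intros Hx; exists (mkposreal (r - Rabs (x - x0)) ltac:(simpl; lra)); intros t Ht.
  change (Rabs (t - x) < r - Rabs (x - x0)) in Ht.
  replace (t - x0) with ((t - x) + (x - x0)) by ring.
  pose proof (Rabs_triang (t - x) (x - x0)); lra.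
Qed.

Lemma CV_radius_gt_of_is_pseries a r F : (forall x, Rabs x < r -> is_pseries a x (F x)) ->
  forall y, Rabs y < r -> Rbar_lt (Rabs y) (CV_radius a).
Proof.
  intros H y Hy.
  set (r' := (Rabs y + r) / 2).
  assert (Hr' : Rabs r' < r) by (pose proof (Rabs_pos y); unfold r'; rewrite Rabs_pos_eq; lra).
  assert (Hle : Rbar_le (Rabs r') (CV_radius a)).
  { apply Rbar_not_lt_le; intros C; apply (CV_disk_outside a r' C).
    apply is_lim_seq_ext with (fun n => scal (pow_n r' n) (a n)).
    - intros n; rewrite pow_n_pow; unfold scal; simpl; unfold mult; simpl; ring.
    - apply ex_series_lim_0; exists (F r'); now apply H. }
  eapply Rbar_lt_le_trans; [| exact Hle]; simpl.
  pose proof (Rabs_pos y); unfold r'; rewrite (Rabs_pos_eq ((Rabs y + r) / 2)); lra.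
Qed.

Lemma real_analytic_PSeries f x0 : real_analytic f -> exists r a, 0 < r /\
  (forall y, Rabs y < r -> Rbar_lt (Rabs y) (CV_radius a)) /\
  (forall x, Rabs (x - x0) < r -> f x = PSeries a (x - x0)).
Proof.
  intros Hf; destruct (Hf x0) as [r [Hr [a Ha]]]; exists r, a; repeat split; auto.
  - apply (CV_radius_gt_of_is_pseries a r (fun y => f (y + x0))); intros y Hy.
    replace y with (y + x0 - x0) at 1 by ring; apply Ha.
    now replace (y + x0 - x0) with y by ring.
  - intros x Hx; symmetry; apply is_pseries_unique, Ha, Hx.
Qed.

Lemma real_analytic_smooth f : real_analytic f -> smooth f.
Proof.
  intros Hf k x0.
  destruct (real_analytic_PSeries f x0 Hf) as [r [a [Hr [Ha Hfa]]]].
  apply ex_derive_ext_loc with (fun x => Derive_n (PSeries a) k (x + - x0)).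
  - apply filter_imp with (fun x => Rabs (x - x0) < r).
    + intros x Hx; rewrite <- Derive_n_comp_trans; symmetry; apply Derive_n_ext_loc.
      apply filter_imp with (2 := locally_Rabs_lt x0 r x Hx); apply Hfa.
    + apply locally_Rabs_lt; rewrite Rminus_eq_0, Rabs_R0; exact Hr.
  - apply (ex_derive_comp (V := R_NormedModule) (Derive_n (PSeries a) k) (fun x => x + - x0)).
    + rewrite Rplus_opp_r; apply (ex_derive_n_PSeries (S k)), Ha; rewrite Rabs_R0; exact Hr.
    + auto_derive; easy.
Qed.

Lemma real_analytic_comp_opp f : real_analytic f -> real_analytic (fun x => f (- x)).
Proof.
  intros Hf x0; destruct (Hf (- x0)) as [r [Hr [a Ha]]].
  exists r; split; [exact Hr |]; exists (fun k => (-1) ^ k * a k); intros x Hx.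
  assert (Hs := Ha (- x) ltac:(replace (- x - - x0) with (- (x - x0)) by ring;
                               now rewrite Rabs_Ropp)).
  eapply is_series_ext; [| exact Hs]; intros n.
  rewrite !pow_n_pow; unfold scal; simpl; unfold mult; simpl.
  replace (- x - - x0) with ((-1) * (x - x0)) by ring; rewrite Rpow_mult_distr; ring.
Qed.

Lemma real_analytic_minus_scal f g c : real_analytic f -> real_analytic g ->
  real_analytic (fun x => f x - c * g x).
Proof.
  intros Hf Hg x0.
  destruct (Hf x0) as [r1 [Hr1 [a Ha]]]; destruct (Hg x0) as [r2 [Hr2 [b Hb]]].
  exists (Rmin r1 r2); split; [now apply Rmin_pos |].
  exists (fun k => a k - c * b k); intros x Hx.
  pose proof (Rmin_l r1 r2); pose proof (Rmin_r r1 r2).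
  apply (is_pseries_minus (V := R_NormedModule) a (PS_scal c b)).
  - apply Ha; lra.
  - apply (is_pseries_scal (V := R_NormedModule)); [apply Rmult_comm | apply Hb; lra].
Qed.

Definition flat_at (h : R -> R) (x : R) : Prop := forall k, (1 <= k)%nat -> Derive_n h k x = 0.

(* Flatness kills every coefficient of the local expansion but the constant one. *)
Lemma real_analytic_flat_locally h x0 : real_analytic h -> flat_at h x0 ->
  locally x0 (flat_at h).
Proof.
  intros Hh Hflat.
  destruct (real_analytic_PSeries h x0 Hh) as [r [a [Hr [Ha Hha]]]].
  assert (Hloc : forall x, Rabs (x - x0) < r -> locally x (fun t => h t = PSeries a (t + - x0))).
  { intros x Hx; apply filter_imp with (2 := locally_Rabs_lt x0 r x Hx); apply Hha. }
  assert (Ha0 : forall k, (1 <= k)%nat -> a k = 0).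
  { intros k Hk.
    assert (E : Derive_n h k x0 = a k * INR (Factorial.fact k)).
    { rewrite (Derive_n_ext_loc _ _ k x0 (Hloc x0 ltac:(rewrite Rminus_eq_0, Rabs_R0; lra))).
      rewrite Derive_n_comp_trans, Rplus_opp_r; apply Derive_n_coef.
      rewrite <- Rabs_R0; apply Ha; rewrite Rabs_R0; exact Hr. }
    rewrite Hflat in E by exact Hk; pose proof (INR_fact_neq_0 k).
    destruct (Rmult_integral _ _ (eq_sym E)); [easy | contradiction]. }
  assert (Hd : forall x, Rabs (x - x0) < r -> Derive h x = 0).
  { intros x Hx; rewrite (Derive_ext_loc _ _ x (Hloc x Hx)).
    change (Derive_n (fun t => PSeries a (t + - x0)) 1 x = 0).
    rewrite Derive_n_comp_trans; simpl; rewrite Derive_PSeries by (apply Ha; exact Hx).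
    rewrite (PSeries_ext _ (fun _ => 0)); [apply PSeries_const_0 |].
    intros n; unfold PS_derive; rewrite Ha0 by lia; ring. }
  apply filter_imp with (2 := locally_Rabs_lt x0 r x0 ltac:(rewrite Rminus_eq_0, Rabs_R0; lra)).
  intros x Hx [|k] Hk; [lia |].
  rewrite <- Derive_n_Derive, (Derive_n_ext_loc _ (fun _ => 0));
    [destruct k; [easy | apply Derive_n_const] |].
  apply filter_imp with (2 := locally_Rabs_lt x0 r x Hx); apply Hd.
Qed.

(* Otherwise the function equal to [-1] on [P] and to [1] off [P] would be continuous and
   contradict the intermediate value theorem. *)
Lemma R_connected (P : R -> Prop) a b : (forall x, P x -> locally x P) ->
  (forall x, ~ P x -> locally x (fun y => ~ P y)) -> P a -> P b.
Proof.
  intros HP HnP Pa; destruct (classic (P b)) as [Pb | nPb]; [exact Pb | exfalso].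
  set (chi := fun x => if excluded_middle_informative (P x) then -1 else 1).
  assert (Hchi : forall Q x, locally x Q -> (forall y, Q y -> chi y = chi x) ->
                   continuity_pt chi x).
  { intros Q x HQ Hc; apply continuity_pt_filterlim.
    apply continuous_ext_loc with (fun _ => chi x); [| apply continuous_const].
    apply filter_imp with Q; [intros y Qy; now rewrite (Hc y Qy) | exact HQ]. }
  assert (Hcont : continuity chi).
  { intros x; destruct (excluded_middle_informative (P x)) as [Px | nPx].
    - apply (Hchi P x (HP x Px)); intros y Py; unfold chi;
        destruct (excluded_middle_informative (P y)), (excluded_middle_informative (P x));
        tauto.
    - apply (Hchi _ x (HnP x nPx)); intros y nPy; unfold chi;
        destruct (excluded_middle_informative (P y)), (excluded_middle_informative (P x));
        tauto. }
  assert (Hab : chi a * chi b <= 0).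
  { unfold chi; destruct (excluded_middle_informative (P a)), (excluded_middle_informative (P b));
      try contradiction; lra. }
  assert (Hz : exists z, chi z = 0).
  { destruct (Rle_dec a b).
    - destruct (IVT_cor chi a b Hcont r Hab) as [z [_ Hz]]; now exists z.
    - destruct (IVT_cor chi b a Hcont ltac:(lra) ltac:(lra)) as [z [_ Hz]]; now exists z. }
  destruct Hz as [z Hz]; unfold chi in Hz; destruct (excluded_middle_informative (P z)); lra.
Qed.

Lemma real_analytic_flat_const h s0 : real_analytic h -> flat_at h s0 ->
  forall x, h x = h s0.
Proof.
  intros Hh Hflat x.
  assert (Hs := real_analytic_smooth h Hh).
  assert (Hall : forall y, flat_at h y).
  { intros y; apply (R_connected (flat_at h) s0 y); [| | exact Hflat].
    - intros z; apply real_analytic_flat_locally, Hh.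
    - intros z Hz; apply not_all_ex_not in Hz as [k Hk].
      apply imply_to_and in Hk as [Hk Hnz].
      apply filter_imp with (fun y => Derive_n h k y <> 0); [intros t Ht Hft; now apply Ht, Hft |].
      apply (smooth_continuous h k z Hs (fun r => r <> 0)).
      exists (mkposreal _ (Rabs_pos_lt _ Hnz)); intros r Hr ->.
      change (Rabs (0 - Derive_n h k z) < Rabs (Derive_n h k z)) in Hr.
      rewrite Rminus_0_l, Rabs_Ropp in Hr; lra. }
  destruct (MVT_gen h s0 x (Derive h)) as [c [_ Hc]].
  - intros y _; apply Derive_correct, smooth_ex_derive, Hs.
  - intros y _; apply continuity_pt_filterlim, (smooth_continuous h 0 y Hs).
  - change (Derive h c) with (Derive_n h 1 c) in Hc; rewrite (Hall c 1%nat) in Hc by lia; lra.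
Qed.

(** * Abel-type integrals *)

Definition abel_int (m : nat) (s0 : R) (phi : R -> R) (th : R) : R :=
  RInt (fun s => phi s / sqrt (th - s ^ m)) 0 s0.

Lemma ex_RInt_continuous_0 (f : R -> R) b : 0 < b ->
  (forall z, 0 <= z <= b -> continuous f z) -> ex_RInt f 0 b.
Proof.
  intros Hb Hf; apply (ex_RInt_continuous (V := R_CompleteNormedModule)).
  rewrite Rmin_left, Rmax_right by lra; exact Hf.
Qed.

Lemma RInt_ext_R (f g : R -> R) a b :
  (forall x, Rmin a b < x < Rmax a b -> f x = g x) -> RInt f a b = RInt g a b.
Proof. apply RInt_ext. Qed.

Lemma is_RInt_ext_R (f g : R -> R) a b l :
  (forall x, Rmin a b < x < Rmax a b -> f x = g x) -> is_RInt f a b l -> is_RInt g a b l.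
Proof. apply is_RInt_ext. Qed.

Lemma is_RInt_derive_0 (F dF : R -> R) b : 0 < b ->
  (forall x, 0 <= x <= b -> is_derive F x (dF x)) ->
  (forall x, 0 <= x <= b -> continuous dF x) -> is_RInt dF 0 b (F b - F 0).
Proof.
  intros Hb HF HdF; apply (is_RInt_derive (V := R_CompleteNormedModule));
    rewrite Rmin_left, Rmax_right by lra; assumption.
Qed.

Lemma pow_pred_mul x n : (1 <= n)%nat -> x * x ^ Nat.pred n = x ^ n.
Proof. intros Hn; destruct n; [lia | reflexivity]. Qed.

Lemma pow_sub_pow_ge x y n : 0 <= x <= y -> (1 <= n)%nat ->
  y ^ Nat.pred n * (y - x) <= y ^ n - x ^ n.
Proof.
  intros Hxy Hn; destruct n as [|n]; [lia |]; simpl.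
  pose proof (pow_incr x y n Hxy); pose proof (pow_le x n (proj1 Hxy)); nra.
Qed.

Lemma is_RInt_inv_sqrt_affine A k e b : 0 < k -> 0 < e -> 0 < b ->
  is_RInt (fun s => A / sqrt (e + k * (b - s))) 0 b (2 * A / k * (sqrt (e + k * b) - sqrt e)).
Proof.
  intros Hk He Hb.
  replace (2 * A / k * (sqrt (e + k * b) - sqrt e))
    with ((fun s => - (2 * A / k) * sqrt (e + k * (b - s))) b
          - (fun s => - (2 * A / k) * sqrt (e + k * (b - s))) 0)
    by (simpl; rewrite Rminus_diag, Rmult_0_r, Rplus_0_r, Rminus_0_r; ring).
  apply (is_RInt_derive_0 (fun s => - (2 * A / k) * sqrt (e + k * (b - s))));
    [exact Hb | |]; intros x Hx; assert (0 < e + k * (b - x)) by nra; pose proof (sqrt_lt_R0 _ H).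
  - auto_derive; [lra |]; replace (b + - x) with (b - x) by ring; field; lra.
  - apply (ex_derive_continuous (V := R_NormedModule)).
    auto_derive; replace (b + - x) with (b - x) by ring; repeat split; lra.
Qed.

Section AbelIntegral.

Variables (m : nat) (s0 : R).
Hypothesis Hs0 : 0 < s0.

Lemma abel_radicand_pos s th : 0 <= s <= s0 -> s0 ^ m < th -> 0 < th - s ^ m.
Proof. intros Hs Hth; pose proof (pow_incr s s0 m Hs); lra. Qed.

Lemma ex_RInt_abel phi th : smooth phi -> s0 ^ m < th ->
  ex_RInt (fun s => phi s / sqrt (th - s ^ m)) 0 s0.
Proof.
  intros Hp Hth; apply ex_RInt_continuous_0; [exact Hs0 |]; intros z Hz.
  pose proof (abel_radicand_pos z th Hz Hth); pose proof (sqrt_lt_R0 _ H).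
  apply (ex_derive_continuous (V := R_NormedModule)).
  auto_derive; replace (th + - z ^ m) with (th - z ^ m) by ring.
  repeat split; try lra; now apply smooth_ex_derive.
Qed.

Definition abel_dkernel (phi : R -> R) (th t : R) : R :=
  - / 2 * phi t / (sqrt (th - t ^ m) * (th - t ^ m)).

Lemma is_derive_abel_kernel phi th t : 0 < th - t ^ m ->
  is_derive (fun z => phi t / sqrt (z - t ^ m)) th (abel_dkernel phi th t).
Proof.
  intros H; pose proof (sqrt_lt_R0 _ H); pose proof (sqrt_sqrt _ (Rlt_le _ _ H)).
  unfold abel_dkernel; auto_derive; replace (th + - t ^ m) with (th - t ^ m) by ring.
  - repeat split; lra.
  - rewrite H1; field; lra.
Qed.

Lemma continuity_2d_abel_dkernel phi th t : smooth phi -> 0 < th - t ^ m ->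
  continuity_2d_pt (fun u v => Derive (fun z => phi v / sqrt (z - v ^ m)) u) th t.
Proof.
  intros Hp H.
  assert (Hrad : continuity_2d_pt (fun u v => u - v ^ m) th t).
  { apply continuity_2d_pt_minus; [apply continuity_2d_pt_id1 |].
    apply (continuity_1d_2d_pt_comp (fun x => x ^ m) (fun u v => v));
      [apply derivable_continuous_pt, derivable_pt_pow | apply continuity_2d_pt_id2]. }
  apply continuity_2d_pt_ext_loc with (abel_dkernel phi).
  { destruct (Hrad (mkposreal _ H)) as [d Hd]; exists d; intros u v Hu Hv.
    specialize (Hd u v Hu Hv); simpl in Hd; apply Rabs_def2 in Hd.
    symmetry; apply is_derive_unique, is_derive_abel_kernel; lra. }
  pose proof (sqrt_lt_R0 _ H).
  unfold abel_dkernel, Rdiv; repeat apply continuity_2d_pt_mult.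
  - apply continuity_2d_pt_const.
  - apply (continuity_1d_2d_pt_comp phi (fun u v => v)); [| apply continuity_2d_pt_id2].
    apply continuity_pt_filterlim, (smooth_continuous phi 0 t Hp).
  - apply continuity_2d_pt_inv; [apply continuity_2d_pt_mult; [| exact Hrad] | nra].
    apply (continuity_1d_2d_pt_comp sqrt (fun u v => u - v ^ m)); [| exact Hrad].
    apply continuity_pt_sqrt; lra.
Qed.

Lemma is_derive_abel_RInt phi th : smooth phi -> s0 ^ m < th ->
  is_derive (abel_int m s0 phi) th (RInt (abel_dkernel phi th) 0 s0).
Proof.
  intros Hp Hth.
  set (e := mkposreal ((th - s0 ^ m) / 2) ltac:(simpl; lra)).
  assert (Hnear : forall u, ball th e u -> s0 ^ m < u).
  { intros u Hu; change (Rabs (u - th) < (th - s0 ^ m) / 2) in Hu; apply Rabs_def2 in Hu; lra. }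
  replace (RInt (abel_dkernel phi th) 0 s0)
    with (RInt (fun t => Derive (fun u => phi t / sqrt (u - t ^ m)) th) 0 s0).
  - apply is_derive_RInt_param; rewrite ?Rmin_left, ?Rmax_right by lra.
    + exists e; intros u Hu t Ht; eexists.
      apply is_derive_abel_kernel, abel_radicand_pos; [exact Ht | now apply Hnear].
    + intros t Ht; apply continuity_2d_abel_dkernel; [exact Hp | now apply abel_radicand_pos].
    + exists e; intros u Hu; apply ex_RInt_abel; [exact Hp | now apply Hnear].
  - apply RInt_ext; rewrite Rmin_left, Rmax_right by lra; intros t Ht.
    apply is_derive_unique, is_derive_abel_kernel, abel_radicand_pos; [lra | exact Hth].
Qed.

Lemma abel_ibp phi th : (1 <= m)%nat -> smooth phi -> s0 ^ m < th ->
  INR m * th * RInt (abel_dkernel phi th) 0 s0 =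
  (1 - INR m / 2) * abel_int m s0 phi th + abel_int m s0 (fun s => s * Derive phi s) th
  - s0 * phi s0 / sqrt (th - s0 ^ m).
Proof.
  intros Hm Hp Hth.
  (* integrate the derivative of [F] over [0, s0] *)
  set (F := fun s => s * phi s / sqrt (th - s ^ m)).
  set (dF := fun s => (phi s + s * Derive phi s) / sqrt (th - s ^ m)
               + INR m / 2 * s ^ m * phi s / (sqrt (th - s ^ m) * (th - s ^ m))).
  assert (HF : is_RInt dF 0 s0 (F s0 - F 0)).
  { apply is_RInt_derive_0; [exact Hs0 | |]; intros x Hx;
      pose proof (abel_radicand_pos x th Hx Hth) as Hr; pose proof (sqrt_lt_R0 _ Hr);
      unfold F, dF.
    - pose proof (sqrt_sqrt _ (Rlt_le _ _ Hr)); rewrite <- (pow_pred_mul x m Hm) at 2.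
      auto_derive; replace (th + - x ^ m) with (th - x ^ m) by ring.
      + repeat split; try lra; now apply smooth_ex_derive.
      + change (Derive (fun y => phi y) x) with (Derive phi x).
        rewrite H0; rewrite <- (pow_pred_mul x m Hm) in *; field; lra.
    - apply (ex_derive_continuous (V := R_NormedModule)).
      auto_derive; replace (th + - x ^ m) with (th - x ^ m) by ring.
      repeat split; try lra; try (now apply smooth_ex_derive);
        [apply smooth_ex_derive, smooth_Derive, Hp | nra]. }
  assert (Hdk : ex_RInt (abel_dkernel phi th) 0 s0).
  { apply ex_RInt_continuous_0; [exact Hs0 |]; intros x Hx.
    pose proof (abel_radicand_pos x th Hx Hth) as Hr; pose proof (sqrt_lt_R0 _ Hr).
    unfold abel_dkernel; apply (ex_derive_continuous (V := R_NormedModule)).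
    auto_derive; replace (th + - x ^ m) with (th - x ^ m) by ring.
    repeat split; try lra; [now apply smooth_ex_derive | nra]. }
  assert (HA := RInt_correct (V := R_CompleteNormedModule) _ _ _ (ex_RInt_abel _ th Hp Hth)).
  assert (HB := RInt_correct (V := R_CompleteNormedModule) _ _ _
    (ex_RInt_abel (fun s => s * Derive phi s) th (smooth_mult_id _ (smooth_Derive _ Hp)) Hth)).
  assert (HK : is_RInt (fun x => INR m * th * abel_dkernel phi th x) 0 s0
                 (INR m * th * RInt (abel_dkernel phi th) 0 s0))
    by now apply (is_RInt_scal (V := R_NormedModule)), (RInt_correct (V := R_CompleteNormedModule)).
  rewrite <- (is_RInt_unique _ _ _ _ HK).
  replace (s0 * phi s0 / sqrt (th - s0 ^ m)) with (F s0 - F 0)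
    by (unfold F; rewrite Rmult_0_l; unfold Rdiv; ring).
  apply is_RInt_unique, (is_RInt_ext_R
    (fun x => (1 - INR m / 2) * (phi x / sqrt (th - x ^ m))
              + (x * Derive phi x) / sqrt (th - x ^ m) - dF x)).
  - rewrite Rmin_left, Rmax_right by lra; intros x Hx.
    pose proof (abel_radicand_pos x th (conj (Rlt_le _ _ (proj1 Hx)) (Rlt_le _ _ (proj2 Hx))) Hth).
    pose proof (sqrt_lt_R0 _ H); unfold dF, abel_dkernel; field; lra.
  - apply (is_RInt_minus (V := R_NormedModule)); [| exact HF].
    apply (is_RInt_plus (V := R_NormedModule)); [| exact HB].
    now apply (is_RInt_scal (V := R_NormedModule)).
Qed.

Lemma Derive_Rpower_mult_abel phi th b : (1 <= m)%nat -> smooth phi -> s0 ^ m < th ->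
  INR m * Derive (fun t => Rpower t b * abel_int m s0 phi t) th =
  Rpower th (b - 1) * ((INR m * b + 1 - INR m / 2) * abel_int m s0 phi th
     + abel_int m s0 (fun s => s * Derive phi s) th - s0 * phi s0 / sqrt (th - s0 ^ m)).
Proof.
  intros Hm Hp Hth.
  assert (Hth0 : 0 < th) by (pose proof (pow_lt s0 m Hs0); lra).
  assert (HR : is_derive (fun t => Rpower t b) th (b * Rpower th (b - 1)))
    by now apply is_derive_Reals, derivable_pt_lim_power.
  rewrite (Derive_mult _ _ _ (ex_intro _ _ HR)
             (ex_intro _ _ (is_derive_abel_RInt phi th Hp Hth))).
  rewrite (is_derive_unique _ _ _ HR), (is_derive_unique _ _ _ (is_derive_abel_RInt phi th Hp Hth)).
  replace (Rpower th b) with (Rpower th (b - 1) * th)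
    by (rewrite <- (Rpower_1 th Hth0) at 2; rewrite <- Rpower_plus; f_equal; ring).
  transitivity (Rpower th (b - 1) *
    (INR m * b * abel_int m s0 phi th + INR m * th * RInt (abel_dkernel phi th) 0 s0)); [ring |].
  rewrite abel_ibp by assumption; ring.
Qed.

Lemma abel_int_minus_scal phi psi c th : smooth phi -> smooth psi -> s0 ^ m < th ->
  abel_int m s0 (fun s => phi s - c * psi s) th =
  abel_int m s0 phi th - c * abel_int m s0 psi th.
Proof.
  intros Hp Hq Hth; unfold abel_int; apply is_RInt_unique.
  apply (is_RInt_ext_R (fun s => phi s / sqrt (th - s ^ m) - c * (psi s / sqrt (th - s ^ m)))).
  - intros s _; unfold Rdiv; ring.
  - apply (is_RInt_minus (V := R_NormedModule));
      [| apply (is_RInt_scal (V := R_NormedModule))];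
      apply (RInt_correct (V := R_CompleteNormedModule)), ex_RInt_abel; assumption.
Qed.

Lemma abel_int_bounded psi : (1 <= m)%nat -> smooth psi ->
  exists M, forall th, s0 ^ m < th <= s0 ^ m + 1 -> Rabs (abel_int m s0 psi th) <= M.
Proof.
  intros Hm Hp.
  destruct (continuity_ab_maj (fun y => Rabs (psi y)) 0 s0) as [c [HA _]]; [lra | |].
  { intros y _; apply continuity_pt_filterlim.
    apply (continuous_comp psi Rabs); [apply (smooth_continuous psi 0 y Hp) |].
    apply continuity_pt_filterlim, Rcontinuity_abs. }
  set (A := Rabs (psi c)); set (k := s0 ^ Nat.pred m).
  assert (Hk : 0 < k) by now apply pow_lt.
  assert (HA0 : 0 <= A) by apply Rabs_pos.
  exists (2 * A / k * sqrt (1 + k * s0)); intros th Hth.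
  set (e := th - s0 ^ m); assert (He : 0 < e) by (unfold e; lra).
  assert (Hrad : forall s, 0 <= s <= s0 -> 0 < e + k * (s0 - s) <= th - s ^ m).
  { intros s Hs; pose proof (pow_sub_pow_ge s s0 m Hs Hm); fold k in H.
    split; [nra | unfold e; lra]. }
  unfold abel_int; eapply Rle_trans; [apply abs_RInt_le; [lra | now apply ex_RInt_abel] |].
  eapply Rle_trans;
    [apply RInt_le with (g := fun s => A / sqrt (e + k * (s0 - s))); [lra | | |] |].
  - apply ex_RInt_continuous_0; [exact Hs0 |]; intros z Hz.
    apply (continuous_comp _ Rabs); [| apply continuity_pt_filterlim, Rcontinuity_abs].
    pose proof (abel_radicand_pos z th Hz (proj1 Hth)); pose proof (sqrt_lt_R0 _ H).
    apply (ex_derive_continuous (V := R_NormedModule)).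
    auto_derive; replace (th + - z ^ m) with (th - z ^ m) by ring.
    repeat split; try lra; now apply smooth_ex_derive.
  - eexists; apply is_RInt_inv_sqrt_affine; assumption.
  - intros s Hs; destruct (Hrad s ltac:(lra)) as [Hpos Hle].
    assert (Hsq : 0 < sqrt (e + k * (s0 - s)) <= sqrt (th - s ^ m))
      by (split; [apply sqrt_lt_R0 | apply sqrt_le_1]; lra).
    unfold Rdiv; rewrite Rabs_mult, (Rabs_pos_eq (/ _))
      by (apply Rlt_le, Rinv_0_lt_compat; lra).
    apply Rmult_le_compat; [apply Rabs_pos | apply Rlt_le, Rinv_0_lt_compat; lra | |].
    + apply HA; lra.
    + apply Rinv_le_contravar; lra.
  - rewrite (is_RInt_unique _ _ _ _ (is_RInt_inv_sqrt_affine A k e s0 Hk He Hs0)).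
    assert (sqrt (e + k * s0) <= sqrt (1 + k * s0)) by (apply sqrt_le_1; unfold e in *; nra).
    pose proof (sqrt_pos e).
    assert (0 <= 2 * A / k) by (apply Rmult_le_pos; [lra | apply Rlt_le, Rinv_0_lt_compat, Hk]).
    nra.
Qed.

End AbelIntegral.

(* The weights of the Abel integrals produced by iterating [D_op], see [Dn_abel_int]. *)
Fixpoint euler_seq (phi : R -> R) (k : nat) : R -> R :=
  match k with
  | O => phi
  | S k => fun s => s * Derive (euler_seq phi k) s - INR k * euler_seq phi k s
  end.

Lemma smooth_euler_seq phi k : smooth phi -> smooth (euler_seq phi k).
Proof.
  intros Hp; induction k as [|k IH]; [exact Hp |].
  apply smooth_minus; [apply smooth_mult_id, smooth_Derive, IH | apply smooth_scal, IH].
Qed.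

Lemma D_op_abel_int m s0 phi k (g : R -> R) K e al th :
  (1 <= m)%nat -> smooth phi -> 0 < s0 -> s0 ^ m < th ->
  (forall t, s0 ^ m < t -> g t = K * Rpower t e * abel_int m s0 (euler_seq phi k) t) ->
  e + al = 1 / 2 - INR (S k) / INR m ->
  D_op m al g th = K * Rpower th (- 1 / 2 - INR (S k) / INR m) *
     (abel_int m s0 (euler_seq phi (S k)) th - s0 * euler_seq phi k s0 / sqrt (th - s0 ^ m)).
Proof.
  intros Hm Hp Hs0 Hth Hg He.
  assert (HmR : 0 < INR m) by (apply lt_0_INR; lia).
  assert (Hk := smooth_euler_seq phi k Hp).
  unfold D_op.
  rewrite (Derive_ext_loc _
    (fun t => K * (Rpower t (1 / 2 - INR (S k) / INR m) * abel_int m s0 (euler_seq phi k) t))).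
  2:{ apply filter_imp with (fun t => s0 ^ m < t).
      - intros t Ht; rewrite Hg, <- He, Rpower_plus by exact Ht; ring.
      - exists (mkposreal (th - s0 ^ m) ltac:(simpl; lra)); intros t Ht.
        change (Rabs (t - th) < th - s0 ^ m) in Ht; apply Rabs_def2 in Ht; lra. }
  rewrite Derive_scal, Rmult_comm, Rmult_assoc, (Rmult_comm _ (INR m)).
  rewrite Derive_Rpower_mult_abel by assumption.
  simpl euler_seq; rewrite abel_int_minus_scal;
    [| exact Hs0 | apply smooth_mult_id, smooth_Derive, Hk | exact Hk | exact Hth].
  replace (1 / 2 - INR (S k) / INR m - 1) with (- 1 / 2 - INR (S k) / INR m) by lra.
  replace (INR m * (1 / 2 - INR (S k) / INR m) + 1 - INR m / 2) with (- INR k)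
    by (rewrite S_INR; field; lra).
  ring.
Qed.

Lemma Dn_abel_int m s0 phi (f : R -> R) K n :
  (1 <= m)%nat -> smooth phi -> 0 < s0 -> (1 <= n)%nat ->
  (forall t, s0 ^ m < t -> f t = K * abel_int m s0 phi t) ->
  (forall j, (j + 2 <= n)%nat -> euler_seq phi j s0 = 0) ->
  forall th, s0 ^ m < th ->
  Dn m n f th = K * Rpower th (- 1 / 2 - INR n / INR m) *
     (abel_int m s0 (euler_seq phi n) th - s0 * euler_seq phi (pred n) s0 / sqrt (th - s0 ^ m)).
Proof.
  intros Hm Hp Hs0 Hn Hf; induction n as [|n IH]; [lia |]; intros Hj th Hth.
  destruct n as [|n].
  - apply (D_op_abel_int m s0 phi 0 f K 0); try assumption.
    + intros t Ht; rewrite Rpower_O, Hf by (pose proof (pow_lt s0 m Hs0); lra); simpl; ring.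
    + simpl; lra.
  - apply (D_op_abel_int m s0 phi (S n) _ K (- 1 / 2 - INR (S n) / INR m)); try assumption.
    + intros t Ht; rewrite IH by (lia || (intros; apply Hj; lia) || lra).
      simpl pred; rewrite (Hj n) by lia; unfold Rdiv; ring.
    + rewrite !S_INR; lra.
Qed.

Lemma Derive_n_euler_seq phi j l s : smooth phi ->
  (forall i, (i < j + l)%nat -> Derive_n phi i s = 0) ->
  Derive_n (euler_seq phi j) l s = s ^ j * Derive_n phi (j + l) s.
Proof.
  intros Hp; revert l; induction j as [|j IH]; intros l Hi; [simpl; ring |].
  assert (Hj := smooth_euler_seq phi j Hp).
  simpl euler_seq.
  rewrite Derive_n_minus_smooth;
    [| apply smooth_mult_id, smooth_Derive, Hj | apply smooth_scal, Hj].
  rewrite Derive_n_scal_l.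
  assert (H1 : Derive_n (euler_seq phi j) (S l) s = s ^ j * Derive_n phi (j + S l) s)
    by (apply IH; intros; apply Hi; lia).
  assert (H0 : Derive_n (euler_seq phi j) l s = 0).
  { rewrite IH; [rewrite (Hi (j + l)%nat); [ring | lia] |]; intros; apply Hi; lia. }
  destruct l as [|l].
  - change (s * Derive (euler_seq phi j) s - INR j * euler_seq phi j s
            = s ^ S j * Derive_n phi (S j + 0) s).
    change (Derive (euler_seq phi j) s) with (Derive_n (euler_seq phi j) 1 s).
    simpl in H0; rewrite H0, H1, Nat.add_0_r, Nat.add_1_r; simpl; ring.
  - rewrite Derive_n_mult_id by (apply smooth_Derive, Hj).
    rewrite !Derive_n_Derive, H1, H0.
    replace (S j + S l)%nat with (j + S (S l))%nat by lia; simpl; ring.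
Qed.

(** * Divergence at the right of a point *)

Lemma at_right_of_interval c d (P : R -> Prop) : 0 < d ->
  (forall t, c < t < c + d -> P t) -> at_right c P.
Proof.
  intros Hd HP; exists (mkposreal d Hd); intros t Ht Hct.
  change (Rabs (t - c) < d) in Ht; apply Rabs_def2 in Ht; apply HP; lra.
Qed.

Lemma filterlim_div_sqrt_at_right c B : 0 < B ->
  filterlim (fun t => B / sqrt (t - c)) (at_right c) (Rbar_locally p_infty).
Proof.
  intros HB P [M HM].
  set (X := Rmax M 0 + 1); assert (HX : 0 < X) by (pose proof (Rmax_r M 0); unfold X; lra).
  apply (at_right_of_interval c ((B / X) ^ 2)); [apply pow_lt, Rdiv_lt_0_compat; lra |].
  intros t Ht; apply HM; pose proof (Rmax_l M 0).
  assert (Hs : 0 < sqrt (t - c) < B / X).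
  { split; [apply sqrt_lt_R0; lra |].
    rewrite <- (sqrt_pow2 (B / X)) by (apply Rlt_le, Rdiv_lt_0_compat; lra).
    apply sqrt_lt_1; [lra | apply pow2_ge_0 | lra]. }
  assert (HXs : X * sqrt (t - c) < B).
  { replace B with (X * (B / X)) by (field; lra); apply Rmult_lt_compat_l; lra. }
  apply Rlt_trans with X; [unfold X; lra |].
  apply (Rmult_lt_reg_r (sqrt (t - c))); [lra |]; unfold Rdiv.
  rewrite Rmult_assoc, Rinv_l, Rmult_1_r by lra; exact HXs.
Qed.

Lemma filterlim_plus_bounded_p_infty {T} (F : (T -> Prop) -> Prop) {FF : Filter F}
  (f g : T -> R) A : F (fun x => Rabs (f x) <= A) ->
  filterlim g F (Rbar_locally p_infty) ->
  filterlim (fun x => f x + g x) F (Rbar_locally p_infty).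
Proof.
  intros Hf Hg P [M HM]; unfold filtermap.
  apply filter_imp with (fun x => Rabs (f x) <= A /\ M + A < g x).
  - intros x [H1 H2]; apply HM.
    pose proof (Rle_abs (- f x)); rewrite Rabs_Ropp in *; lra.
  - apply filter_and; [exact Hf |].
    apply (Hg (fun y => M + A < y)); exists (M + A); tauto.
Qed.

Lemma filterlim_mult_bounded_below_p_infty {T} (F : (T -> Prop) -> Prop) {FF : Filter F}
  (h g : T -> R) L : 0 < L -> F (fun x => L <= h x) ->
  filterlim g F (Rbar_locally p_infty) ->
  filterlim (fun x => h x * g x) F (Rbar_locally p_infty).
Proof.
  intros HL Hh Hg P [M HM]; unfold filtermap.
  set (X := Rmax M 0 / L).
  assert (HX : L * X = Rmax M 0) by (unfold X; field; lra).
  assert (HX0 : 0 <= X) by (apply Rdiv_le_0_compat; [apply Rmax_r | exact HL]).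
  pose proof (Rmax_l M 0).
  apply filter_imp with (fun x => L <= h x /\ X < g x).
  - intros x [H1 H2]; apply HM.
    assert (L * g x <= h x * g x) by (apply Rmult_le_compat_r; lra).
    assert (L * X < L * g x) by (apply Rmult_lt_compat_l; lra).
    lra.
  - apply filter_and; [exact Hh |].
    apply (Hg (fun y => X < y)); exists X; tauto.
Qed.

Lemma Rpower_le_neg_exponent x y p : p < 0 -> 0 < x <= y -> Rpower y p <= Rpower x p.
Proof.
  intros Hp Hxy; replace p with (- - p) by ring.
  rewrite (Rpower_Ropp y (- p)), (Rpower_Ropp x (- p)).
  apply Rinv_le_contravar; [apply exp_pos | apply Rle_Rpower_l; lra].
Qed.

Lemma filterlim_abel_boundary_p_infty (I : R -> R) c K p B A :
  0 < c -> 0 < K -> p < 0 -> B < 0 ->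
  (forall th, c < th <= c + 1 -> Rabs (I th) <= A) ->
  filterlim (fun th => K * Rpower th p * (I th - B / sqrt (th - c)))
    (at_right c) (Rbar_locally p_infty).
Proof.
  intros Hc HK Hp HB HI.
  apply (filterlim_mult_bounded_below_p_infty _ _ _ (K * Rpower (c + 1) p)).
  - apply Rmult_lt_0_compat; [exact HK | apply exp_pos].
  - apply (at_right_of_interval c 1); [lra |]; intros t Ht.
    apply Rmult_le_compat_l; [lra | apply Rpower_le_neg_exponent; lra].
  - apply (filterlim_ext (fun th => I th + - B / sqrt (th - c))); [intros; unfold Rdiv; ring |].
    apply (filterlim_plus_bounded_p_infty _ _ _ A).
    + apply (at_right_of_interval c 1); [lra |]; intros t Ht; apply HI; lra.
    + apply filterlim_div_sqrt_at_right; lra.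
Qed.

Lemma filterlim_m_infty_of_opp {T} (F : (T -> Prop) -> Prop) {FF : Filter F} (g : T -> R) :
  filterlim (fun x => - g x) F (Rbar_locally p_infty) -> filterlim g F (Rbar_locally m_infty).
Proof.
  intros H; apply (filterlim_ext (fun x => - - g x)); [intros; ring |].
  exact (filterlim_comp _ _ _ _ Ropp _ _ _ H (filterlim_Rbar_opp p_infty)).
Qed.

Lemma Dn_abel_limits m s0 phi K (f : R -> R) N :
  (1 <= m)%nat -> smooth phi -> 0 < s0 -> 0 < K -> (1 <= N)%nat ->
  (forall t, s0 ^ m < t -> f t = K * abel_int m s0 phi t) ->
  (forall i, (i < pred N)%nat -> Derive_n phi i s0 = 0) ->
  (Derive_n phi (pred N) s0 < 0 ->
     filterlim (Dn m N f) (at_right (s0 ^ m)) (Rbar_locally p_infty)) /\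
  (0 < Derive_n phi (pred N) s0 ->
     filterlim (Dn m N f) (at_right (s0 ^ m)) (Rbar_locally m_infty)).
Proof.
  intros Hm Hp Hs0 HK HN Hf Hvan.
  assert (Heuler : forall j, (j <= pred N)%nat ->
                     euler_seq phi j s0 = s0 ^ j * Derive_n phi j s0).
  { intros j Hj; replace (s0 ^ j * Derive_n phi j s0)
      with (s0 ^ j * Derive_n phi (j + 0) s0) by now rewrite Nat.add_0_r.
    apply (Derive_n_euler_seq phi j 0 s0 Hp); intros i Hi; apply Hvan; lia. }
  assert (Hform := Dn_abel_int m s0 phi f K N Hm Hp Hs0 HN Hf).
  specialize (Hform ltac:(intros j Hj; rewrite Heuler, Hvan by lia; ring)).
  set (B := s0 * euler_seq phi (pred N) s0).
  assert (HB : B = s0 ^ N * Derive_n phi (pred N) s0).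
  { unfold B; rewrite Heuler by lia; rewrite <- Rmult_assoc, <- (pow_pred_mul s0 N HN); ring. }
  assert (HsN : 0 < s0 ^ N) by now apply pow_lt.
  assert (Hc : 0 < s0 ^ m) by now apply pow_lt.
  assert (Hp' : - 1 / 2 - INR N / INR m < 0).
  { assert (0 < INR m) by (apply lt_0_INR; lia).
    assert (0 <= INR N / INR m) by (apply Rdiv_le_0_compat; [apply pos_INR | lra]); lra. }
  destruct (abel_int_bounded m s0 Hs0 (euler_seq phi N) Hm (smooth_euler_seq phi N Hp))
    as [A HA].
  split; intros Hsign.
  - apply (filterlim_ext_loc
             (fun th => K * Rpower th (- 1 / 2 - INR N / INR m) *
                        (abel_int m s0 (euler_seq phi N) th - B / sqrt (th - s0 ^ m)))).
    + exists (mkposreal 1 Rlt_0_1); intros th _ Hth; symmetry; apply Hform, Hth.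
    + apply (filterlim_abel_boundary_p_infty _ _ _ _ _ A); try assumption; nra.
  - apply (filterlim_m_infty_of_opp (at_right (s0 ^ m))).
    apply (filterlim_ext_loc
             (fun th => K * Rpower th (- 1 / 2 - INR N / INR m) *
                        (- abel_int m s0 (euler_seq phi N) th - (- B) / sqrt (th - s0 ^ m)))).
    + exists (mkposreal 1 Rlt_0_1); intros th _ Hth; rewrite Hform by exact Hth.
      unfold B, Rdiv; ring.
    + apply (filterlim_abel_boundary_p_infty _ _ _ _ _ A); try assumption; [nra |].
      intros th Hth; rewrite Rabs_Ropp; now apply HA.
Qed.

(** * The potential *)

Lemma pow_opp_even x n : Nat.Even n -> (- x) ^ n = x ^ n.
Proof. intros [k ->]; rewrite !pow_mult; f_equal; ring. Qed.

Lemma a_fun_abel_int m s0 b (U Vv : R -> R) th : smooth U -> smooth Vv -> 0 < s0 ->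
  s0 ^ m < th -> U 0 = 0 -> U s0 = b -> (forall s, 0 <= s <= s0 -> Vv (U s) = s ^ m) ->
  a_fun Vv b th = / sqrt 2 * abel_int m s0 (Derive U) th.
Proof.
  intros HU HV Hs0 Hth U0 Ub HVU.
  assert (Hsq2 : 0 < sqrt 2) by (apply sqrt_lt_R0; lra).
  unfold a_fun; rewrite <- U0, <- Ub.
  rewrite <- (RInt_comp (V := R_CompleteNormedModule) _ U (Derive U));
    rewrite ?Rmin_left, ?Rmax_right by lra.
  - unfold abel_int; rewrite <- (RInt_scal (V := R_CompleteNormedModule)) by
      (apply ex_RInt_abel; [| apply smooth_Derive |]; assumption).
    apply RInt_ext_R; rewrite Rmin_left, Rmax_right by lra; intros x Hx.
    rewrite HVU by lra.
    assert (0 < th - x ^ m) by (apply (abel_radicand_pos m s0); lra).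
    pose proof (sqrt_lt_R0 _ H); change (scal ?a ?b) with (a * b); field; lra.
  - intros x Hx; pose proof (abel_radicand_pos m s0 x th Hx Hth); rewrite <- (HVU x Hx) in H.
    apply (ex_derive_continuous (V := R_NormedModule)).
    auto_derive; repeat split; try lra; [now apply smooth_ex_derive |].
    apply Rgt_not_eq, Rmult_lt_0_compat; [| apply sqrt_lt_R0]; lra.
  - intros x Hx; split; [apply Derive_correct, smooth_ex_derive, HU |].
    apply (smooth_continuous _ 0 x (smooth_Derive U HU)).
Qed.

Lemma pow_lt_pow_l a b n : 0 <= a < b -> (1 <= n)%nat -> a ^ n < b ^ n.
Proof.
  intros Hab Hn; destruct n as [|n]; [lia |]; simpl.
  pose proof (pow_incr a b n (conj (proj1 Hab) (Rlt_le _ _ (proj2 Hab)))).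
  pose proof (pow_le a n (proj1 Hab)); pose proof (pow_lt b n ltac:(lra)); nra.
Qed.

Lemma pow_inj_nonneg a b n : 0 <= a -> 0 <= b -> (1 <= n)%nat -> a ^ n = b ^ n -> a = b.
Proof.
  intros Ha Hb Hn E; destruct (Rtotal_order a b) as [H | [H | H]]; [| exact H |].
  - pose proof (pow_lt_pow_l a b n (conj Ha H) Hn); lra.
  - pose proof (pow_lt_pow_l b a n (conj Hb H) Hn); lra.
Qed.

Section Potential.

Variables (V : R -> R) (m : nat) (Vs W : R -> R).
Hypotheses (HV : UM V) (Hdeg : is_deg0 V m) (HVs : is_Vstar V m Vs W).

Lemma deg0_ge1 : (1 <= m)%nat.
Proof.
  destruct Hdeg as [Hm _], HV as [_ [_ [HV0 _]]].
  destruct m; [simpl in Hm; contradiction | lia].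
Qed.

Lemma smooth_Vstar : smooth Vs.
Proof. apply real_analytic_smooth, HVs. Qed.

Lemma smooth_W : smooth W.
Proof. apply real_analytic_smooth, HVs. Qed.

Lemma smooth_V : smooth V.
Proof. apply real_analytic_smooth, HV. Qed.

Lemma Vstar_increasing a b : a < b -> Vs a < Vs b.
Proof.
  intros Hab; apply (incr_function Vs m_infty p_infty (Derive Vs)); try easy.
  - intros x _ _; apply Derive_correct, smooth_ex_derive, smooth_Vstar.
  - intros x _ _; apply HVs.
Qed.

Lemma Vstar_0 : Vs 0 = 0.
Proof.
  destruct HVs as [_ [_ [_ [_ [_ HVsm]]]]].
  destruct (Req_dec (Vs 0) 0) as [E | E]; [exact E | exfalso].
  apply (pow_nonzero _ m E); rewrite HVsm; apply HV.
Qed.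

Lemma W_0 : W 0 = 0.
Proof. rewrite <- Vstar_0 at 1; apply HVs. Qed.

Lemma V_W s : V (W s) = s ^ m.
Proof. destruct HVs as [_ [_ [_ [HVsW [_ HVsm]]]]]; now rewrite <- HVsm, HVsW. Qed.

Lemma deg0_even : Nat.Even m.
Proof.
  destruct (Nat.Even_or_Odd m) as [Hev | [k Hk]]; [exact Hev | exfalso].
  assert (Hn : Vs (-1) < 0) by (rewrite <- Vstar_0; apply Vstar_increasing; lra).
  destruct HVs as [_ [_ [_ [_ [_ HVsm]]]]].
  assert (H0 := proj1 (proj2 HV) (-1)); rewrite <- HVsm, Hk, pow_add, pow_mult in H0.
  assert (0 < (Vs (-1) ^ 2) ^ k) by (apply pow_lt; nra).
  rewrite pow_1 in H0; nra.
Qed.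

Lemma Vbar_Wbar s : Vbar V (Wbar W s) = s ^ m.
Proof. unfold Vbar, Wbar; rewrite Ropp_involutive, V_W; apply pow_opp_even, deg0_even. Qed.

Lemma smooth_Wbar : smooth (Wbar W).
Proof.
  apply smooth_ext with (fun x => (-1) * W (- x)); [intros; unfold Wbar; ring |].
  apply smooth_scal, smooth_comp_opp, smooth_W.
Qed.

Lemma Wbar_Vstar xi xibar : 0 < xi -> 0 < xibar -> Vbar V xibar = V xi ->
  Wbar W (Vs xi) = xibar.
Proof.
  intros Hxi Hxib Hbar; destruct HVs as [_ [_ [HWVs [_ [_ HVsm]]]]].
  assert (Hneg : Vs (- xibar) < 0) by (rewrite <- Vstar_0; apply Vstar_increasing; lra).
  assert (Hpos : 0 < Vs xi) by (rewrite <- Vstar_0; apply Vstar_increasing; lra).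
  assert (E : Vs xi = - Vs (- xibar)).
  { apply (pow_inj_nonneg _ _ m); [lra | lra | exact deg0_ge1 |].
    rewrite pow_opp_even, !HVsm by exact deg0_even; exact (eq_sym Hbar). }
  unfold Wbar; rewrite E, Ropp_involutive, HWVs; ring.
Qed.

Lemma a_fun_diff_abel_int xi xibar gamma th : 0 < xi -> 0 < xibar ->
  Vbar V xibar = V xi -> Vs xi ^ m < th ->
  a_fun V xi th - gamma * a_fun (Vbar V) xibar th =
  / sqrt 2 * abel_int m (Vs xi) (fun s => Derive W s - gamma * Derive (Wbar W) s) th.
Proof.
  intros Hxi Hxib Hbar Hth; destruct HVs as [_ [_ [HWVs _]]].
  assert (Hs0 : 0 < Vs xi) by (rewrite <- Vstar_0; apply Vstar_increasing; lra).
  assert (Wbar0 : Wbar W 0 = 0) by (unfold Wbar; rewrite Ropp_0, W_0; ring).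
  rewrite (a_fun_abel_int m (Vs xi) xi W V th smooth_W smooth_V Hs0 Hth W_0 (HWVs xi)
             (fun s _ => V_W s)).
  rewrite (a_fun_abel_int m (Vs xi) xibar (Wbar W) (Vbar V) th smooth_Wbar
             (smooth_comp_opp V smooth_V) Hs0 Hth Wbar0 (Wbar_Vstar xi xibar Hxi Hxib Hbar)
             (fun s _ => Vbar_Wbar s)).
  rewrite abel_int_minus_scal;
    [ring | exact Hs0 | apply smooth_Derive, smooth_W |
     apply smooth_Derive, smooth_Wbar | exact Hth].
Qed.

Lemma Vbar_of_W_scaled gamma : (forall x, W x = gamma * Wbar W x) ->
  forall x, Vbar V x = V (gamma * x).
Proof.
  intros HW x; destruct HVs as [_ [_ [HWVs [_ [_ HVsm]]]]].
  destruct (Req_dec gamma 0) as [G0 | G0].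
  - specialize (HW (Vs 1)); rewrite HWVs, G0 in HW; lra.
  - set (s := Vs (gamma * x)).
    assert (E : W (- s) = - x).
    { specialize (HW s); unfold Wbar, s in HW; rewrite HWVs in HW.
      apply (Rmult_eq_reg_l gamma); [| exact G0].
      replace (gamma * W (- s)) with (- (gamma * - W (- s))) by ring.
      unfold s; rewrite <- HW; ring. }
    unfold Vbar; rewrite <- E, V_W, pow_opp_even by exact deg0_even.
    unfold s; apply HVsm.
Qed.

Lemma exists_first_mismatch xi gamma : (exists x, Vbar V x <> V (gamma * x)) ->
  exists N, (1 <= N)%nat /\
    (forall k, (1 <= k)%nat -> (k < N)%nat ->
       Derive_n W k (Vs xi) = gamma * Derive_n (Wbar W) k (Vs xi)) /\
    Derive_n W N (Vs xi) <> gamma * Derive_n (Wbar W) N (Vs xi).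
Proof.
  intros [x0 Hx0].
  set (P := fun n => (1 <= n)%nat /\
              Derive_n W n (Vs xi) <> gamma * Derive_n (Wbar W) n (Vs xi)).
  assert (HP : exists n, P n).
  { apply NNPP; intros Hno; apply Hx0, Vbar_of_W_scaled; intros x.
    set (h := fun x => W x - gamma * Wbar W x).
    assert (Hh : real_analytic h).
    { replace h with (fun x => W x - (- gamma) * W (- x))
        by (apply functional_extensionality; intros y; unfold h, Wbar; ring).
      apply real_analytic_minus_scal, real_analytic_comp_opp; apply HVs. }
    assert (Hflat : flat_at h (Vs xi)).
    { intros k Hk; unfold h; rewrite Derive_n_minus_smooth, Derive_n_scal_l;
        [| apply smooth_W | apply smooth_scal, smooth_Wbar].
      destruct (Req_dec (Derive_n W k (Vs xi)) (gamma * Derive_n (Wbar W) k (Vs xi)));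
        [lra | exfalso; apply Hno; exists k; split; assumption]. }
    assert (Hh0 : h 0 = 0) by (unfold h, Wbar; rewrite Ropp_0, W_0; ring).
    pose proof (real_analytic_flat_const h _ Hh Hflat x) as Hx.
    rewrite <- (real_analytic_flat_const h _ Hh Hflat 0), Hh0 in Hx; unfold h in Hx; lra. }
  destruct (dec_inh_nat_subset_has_unique_least_element P (fun n => classic (P n)) HP)
    as [N [[[HN1 HN] Hmin] _]].
  exists N; repeat split; [exact HN1 | | exact HN].
  intros k Hk1 HkN.
  destruct (Req_dec (Derive_n W k (Vs xi)) (gamma * Derive_n (Wbar W) k (Vs xi))) as [E | E];
    [exact E | specialize (Hmin k (conj Hk1 E)); lia].
Qed.

End Potential.

Theorem proposition3p1
  (V : R -> R) (m : nat) (Vs W : R -> R) (xi xibar gamma : R) :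
  UM V ->
  is_deg0 V m ->
  is_Vstar V m Vs W ->
  0 < xi ->
  0 < xibar -> Vbar V xibar = V xi ->
  (exists x, Vbar V x <> V (gamma * x)) ->
  let s0 := Vs xi in
  let cond := fun N : nat =>
    (1 <= N)%nat /\
    (forall k, (1 <= k)%nat -> (k < N)%nat ->
       Derive_n W k s0 = gamma * Derive_n (Wbar W) k s0) /\
    Derive_n W N s0 <> gamma * Derive_n (Wbar W) N s0 in
  let f := fun theta => a_fun V xi theta - gamma * a_fun (Vbar V) xibar theta in
  (exists N, cond N) /\
  (forall N, cond N ->
     (gamma * Derive_n (Wbar W) N s0 > Derive_n W N s0 ->
        filterlim (Dn m N f) (at_right (V xi)) (Rbar_locally p_infty)) /\
     (gamma * Derive_n (Wbar W) N s0 < Derive_n W N s0 ->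
        filterlim (Dn m N f) (at_right (V xi)) (Rbar_locally m_infty))).
Proof.
  intros HV Hdeg HVs Hxi Hxib Hbar Hmis s0 cond f.
  split; [exact (exists_first_mismatch V m Vs W HV HVs xi gamma Hmis) |].
  intros N [HN [Hagree Hdiff]].
  set (phi := fun s => Derive W s - gamma * Derive (Wbar W) s).
  assert (Hphi : forall i, Derive_n phi i s0 =
                   Derive_n W (S i) s0 - gamma * Derive_n (Wbar W) (S i) s0).
  { intros i; unfold phi; rewrite Derive_n_minus_smooth, Derive_n_scal_l, !Derive_n_Derive;
      [reflexivity | apply smooth_Derive, (smooth_W V m Vs W HVs) |].
    apply smooth_scal, smooth_Derive, (smooth_Wbar V m Vs W HVs). }
  assert (Hs0 : 0 < s0) by (rewrite <- (Vstar_0 V m Vs W HV HVs);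
                            apply (Vstar_increasing V m Vs W HVs), Hxi).
  replace (V xi) with (s0 ^ m) by apply HVs.
  destruct (Dn_abel_limits m s0 phi (/ sqrt 2) f N (deg0_ge1 V m Vs W HV Hdeg HVs))
    as [Hplus Hminus]; try assumption.
  - apply smooth_minus; [apply smooth_Derive, (smooth_W V m Vs W HVs) |].
    apply smooth_scal, smooth_Derive, (smooth_Wbar V m Vs W HVs).
  - apply Rinv_0_lt_compat, sqrt_lt_R0; lra.
  - intros t Ht; exact (a_fun_diff_abel_int V m Vs W HV Hdeg HVs xi xibar gamma t Hxi Hxib Hbar Ht).
  - intros i Hi; rewrite Hphi, Hagree by lia; ring.
  - rewrite Hphi, (Nat.succ_pred_pos N) in Hplus, Hminus by lia.
    split; intros Hsign; [apply Hplus | apply Hminus]; lra.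
Qed.
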